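(* Let $T$ be an invertible operator in $\mathcal D(\mathcal P_n)$. Then for every nonconstant $f\in\mathcal P_n$ and every $v\in Z(Tf)$ there exists $u\in Z(f)$ with $|v-u|\le\varrho[T\phi_n]$.
   Context: Let $n\ge 1$ be an integer and $\mathcal P_n$ the complex vector space of polynomials in one complex variable of degree at most $n$; $\phi_k(z)=z^k/k!$. $D$ is differentiation on $\mathcal P_n$, $I$ the identity, and $\mathcal D(\mathcal P_n)$ the linear span of $I,D,\dots,D^n$. For a nonzero $f$, $Z(f)$ is the multiset of roots of $f$ (with multiplicity). For nonconstant $f$, the root radius is $\varrho[f]=\max\{|u|:u\in Z(f)\}$. *)

From HB Require Import structures.
From mathcomp Require Import all_boot all_order all_algebra.
From mathcomp Require Import complex.
From mathcomp Require Import reals.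
Set Implicit Arguments. Unset Strict Implicit. Unset Printing Implicit Defensive.
Import Order.TTheory GRing.Theory Num.Theory.
Local Open Scope ring_scope.

Section Defs.
Variable C : numClosedFieldType.

Definition inPn (n : nat) (p : {poly C}) : bool := (size p <= n.+1)%N.

Definition phi (k : nat) : {poly C} := (k`!%:R)^-1 *: 'X^k.

(* The element c_0 I + c_1 D + ... + c_n D^n of D(P_n), acting on polynomials *)
Definition diffOp (n : nat) (c : 'I_n.+1 -> C) (p : {poly C}) : {poly C} :=
  \sum_(k < n.+1) c k *: p^`(k).

Definition invertibleOn (n : nat) (T : {poly C} -> {poly C}) : Prop :=
  exists S : {poly C} -> {poly C},
    [/\ forall p, inPn n p -> inPn n (S p),
        forall p, inPn n p -> S (T p) = p
      & forall p, inPn n p -> T (S p) = p].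

(* Z(p) : the multiset of roots of p (meaningful for p != 0) *)
Definition Zroots (p : {poly C}) : seq C := sval (closed_field_poly_normal p).

Definition rootRadius (p : {poly C}) : C :=
  \big[Num.max/0]_(z <- Zroots p) `|z|.
End Defs.

From mathcomp Require Import all_boot all_order all_algebra.
From mathcomp Require Import complex reals.
From mathcomp Require Import ring.
Import Order.TTheory GRing.Theory Num.Theory.
Set Implicit Arguments. Unset Strict Implicit. Unset Printing Implicit Defensive.
Local Open Scope ring_scope.

(* Put Q := T phi_n and rho := rootRadius Q.  Since Q^(n-k)(0) = c_k, the value
   (T f)(v) = \sum_k f^(k)(v) Q^(n-k)(0) is a bilinear pairing of f and Q.
   Invertibility of T forces c_0 != 0, so Q has degree exactly n, with all its
   roots in the closed disk of radius rho.  Suppose every root u of f has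
   |v - u| > rho.  Splitting off a factor X - u of f turns the pairing into the
   pairing of the cofactor with the polar derivative of Q with pole v - u,
   which lies outside the disk; by Laguerre's theorem that polar derivative
   again has full degree and all its roots in the disk.  Once f is exhausted
   the pairing is a nonzero multiple of the leading coefficient of Q, so
   (T f)(v) != 0. *)

Lemma norm_sum_le_size (R : numDomainType) (s : seq R) (b : R) :
  (forall r, r \in s -> `|r| <= b) -> `|\sum_(r <- s) r| <= b *+ size s.
Proof.
elim: s => [|r s IH] hs; first by rewrite big_nil normr0.
rewrite big_cons mulrS; apply: le_trans (ler_normD _ _) _; apply: lerD.
  by apply: hs; rewrite inE eqxx.
by apply: IH => x hx; apply: hs; rewrite inE hx orbT.
Qed.

Section Zroots.
Variable C : numClosedFieldType.

Lemma Zroots_spec (p : {poly C}) :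
  p = lead_coef p *: \prod_(z <- Zroots p) ('X - z%:P).
Proof. by rewrite /Zroots; case: closed_field_poly_normal. Qed.

Lemma mem_Zroots (p : {poly C}) z : p != 0 -> (z \in Zroots p) = root p z.
Proof.
move=> p0; rewrite [in RHS](Zroots_spec p) rootE hornerZ mulf_eq0.
by rewrite lead_coef_eq0 (negbTE p0) -rootE root_prod_XsubC.
Qed.

Lemma size_Zroots (p : {poly C}) : p != 0 -> size (Zroots p) = (size p).-1.
Proof.
move=> p0; have := congr1 (fun q : {poly C} => size q) (Zroots_spec p).
by rewrite /= size_scale ?lead_coef_eq0 // size_prod_XsubC => ->.
Qed.

Lemma le_rootRadius (p : {poly C}) z : z \in Zroots p -> `|z| <= rootRadius p.
Proof.
rewrite /rootRadius; elim: (Zroots p) => // x s IH.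
rewrite inE big_cons comparable_le_max ?real_comparable ?normr_real //.
  by case/orP=> [/eqP -> | /IH ->]; rewrite ?lexx ?orbT.
by rewrite bigmax_real ?real0 // => y _; exact: normr_real.
Qed.

Lemma rootRadius_ge0 (p : {poly C}) : 0 <= rootRadius p.
Proof.
rewrite /rootRadius; elim: (Zroots p) => [|x s IH]; first by rewrite big_nil.
rewrite big_cons comparable_le_max ?real_comparable ?normr_real ?IH ?orbT //.
by rewrite bigmax_real ?real0 // => y _; exact: normr_real.
Qed.
End Zroots.

Section MoebiusDisk.
Variables (C : numClosedFieldType) (rho : C).
Hypothesis rho_ge0 : 0 <= rho.

Lemma moebius_disk_identity (z w : C) :
  `|z^* * w - rho ^+ 2| ^+ 2 - (rho * `|z - w|) ^+ 2
  = (`|z| ^+ 2 - rho ^+ 2) * (`|w| ^+ 2 - rho ^+ 2).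
Proof.
have rho_conj : rho^* = rho by exact: conj_Creal (ger0_real rho_ge0).
rewrite exprMn !normCK !rmorphB !rmorphM ?rmorphXn /= conjCK rho_conj.
ring.
Qed.

Lemma moebius_in_disk (z w : C) : rho < `|z| -> w != z ->
  (`|(`|z| ^+ 2 - rho ^+ 2) / (z - w) - z^*| <= rho) = (`|w| <= rho).
Proof.
move=> hz hw; have zw : z - w != 0 by rewrite subr_eq0 eq_sym.
have -> : (`|z| ^+ 2 - rho ^+ 2) / (z - w) - z^* = (z^* * w - rho ^+ 2) / (z - w).
  by rewrite normCK; field.
rewrite normf_div ler_pdivrMr ?normr_gt0 //.
rewrite -(ler_pXn2r (_ : (0 < 2)%N)) ?nnegrE ?normr_ge0 ?mulr_ge0 //.
rewrite -[LHS]subr_le0 moebius_disk_identity pmulr_rle0 ?subr_le0.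
  by rewrite (ler_pXn2r (_ : (0 < 2)%N)) ?nnegrE ?normr_ge0.
by rewrite subr_gt0 (ltr_pXn2r (_ : (0 < 2)%N)) ?nnegrE ?normr_ge0.
Qed.

Lemma moebius_sum_in_disk (s : seq C) z : rho < `|z| ->
  (forall r, r \in s -> `|r| <= rho) ->
  `|(`|z| ^+ 2 - rho ^+ 2) * \sum_(r <- s) (z - r)^-1 - z^* *+ size s|
    <= rho *+ size s.
Proof.
move=> hz; elim: s => [|r s IH] hs; first by rewrite big_nil mulr0 subrr normr0.
rewrite big_cons /= !mulrS mulrDr.
have -> : forall a b c d : C, a + b - (c + d) = (a - c) + (b - d).
  by move=> a b c d; ring.
apply: le_trans (ler_normD _ _) _; apply: lerD; last first.
  by apply: IH => x hx; apply: hs; rewrite inE hx orbT.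
have hr : `|r| <= rho by apply: hs; rewrite inE eqxx.
have rz : r != z by apply: contraTneq hr => ->; rewrite lt_geF.
by rewrite (moebius_in_disk hz rz).
Qed.
End MoebiusDisk.

Lemma horner0_derivn_neq0 (R : numDomainType) (Q : {poly R}) N : size Q = N.+1 -> Q^`(N).[0] != 0.
Proof.
move=> sQ; rewrite horner_coef0 coef_derivn addn0 ffactnn mulrn_eq0 negb_or.
have Q0 : Q != 0 by rewrite -size_poly_eq0 sQ.
by move: Q0; rewrite -lead_coef_eq0 lead_coefE sQ -lt0n fact_gt0.
Qed.

Section Pairing.
Variable R : comNzRingType.

Definition pairing (N : nat) (v : R) (f Q : {poly R}) :=
  \sum_(k < N.+1) f^`(k).[v] * Q^`(N - k).[0].

Definition polar_deriv (N : nat) (z : R) (Q : {poly R}) :=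
  Q *+ N - ('X - z%:P) * Q^`().

Lemma derivn_derivn (p : {poly R}) a b : p^`(a)^`(b) = p^`(b + a).
Proof. by rewrite /derivn iterD. Qed.

Lemma derivn_XsubCM (a : R) (g : {poly R}) k :
  (('X - a%:P) * g)^`(k) = ('X - a%:P) * g^`(k) + g^`(k.-1) *+ k.
Proof.
elim: k => [|k IH]; first by rewrite !derivn0 mulr0n addr0.
rewrite derivnS IH derivD derivM derivXsubC mul1r derivMn -derivnS.
have -> : g^`(k.-1)^`() *+ k = g^`(k) *+ k.
  by case: k {IH} => [|k]; rewrite ?mulr0n //= -derivnS.
by rewrite /= mulrS; ring.
Qed.

Lemma pairingC N v (a : R) Q : pairing N v a%:P Q = a * Q^`(N).[0].
Proof.
rewrite /pairing big_ord_recl derivn0 hornerC subn0 big1 ?addr0 // => k _.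
by rewrite derivnC /= horner0 mul0r.
Qed.

Lemma horner0_derivn_polar_deriv N z (Q : {poly R}) m :
  (polar_deriv N z Q)^`(m).[0]
  = Q^`(m).[0] *+ N - Q^`(m).[0] *+ m + z * Q^`(m.+1).[0].
Proof.
rewrite /polar_deriv derivnB derivnMn derivn_XsubCM.
have -> : Q^`()^`(m.-1) *+ m = Q^`(m) *+ m.
  by case: m => [|m]; rewrite ?mulr0n //= -derivSn.
rewrite -derivSn !(hornerE, hornerMn) /=.
ring.
Qed.

Lemma pairing_XsubCM N v u (g Q : {poly R}) : (size g <= N.+1)%N ->
  pairing N.+1 v (('X - u%:P) * g) Q = pairing N v g (polar_deriv N.+1 (v - u) Q).
Proof.
move=> sg; rewrite /pairing.
under eq_bigr => k _ do
  rewrite derivn_XsubCM hornerD hornerMn hornerM hornerXsubC mulrDl.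
rewrite big_split /= big_ord_recr /= -derivnS derivn_poly0 // horner0.
rewrite mulr0 mul0r addr0 [X in _ + X]big_ord_recl mulr0n mul0r add0r.
rewrite -big_split /=; apply: eq_bigr => i _.
have hi : (i <= N)%N by rewrite -ltnS.
rewrite horner0_derivn_polar_deriv /bump /= add1n subSn // subSS -derivnS.
have -> : Q^`(N - i).[0] *+ N.+1
    = Q^`(N - i).[0] *+ (N - i) + Q^`(N - i).[0] *+ i.+1.
  by rewrite -mulrnDr addnS subnK.
by rewrite add0n; ring.
Qed.

Lemma coef_polar_deriv N z (Q : {poly R}) i :
  (polar_deriv N z Q)`_i = Q`_i *+ N - Q`_i *+ i + (z * Q`_i.+1) *+ i.+1.
Proof.
rewrite /polar_deriv coefB coefMn mulrBl coefB coefXM coefCM !coef_deriv.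
case: i => [|i] /=; first by rewrite mulr0n subr0 sub0r opprK mulrnAr.
by ring.
Qed.
End Pairing.

Section Laguerre.
Variables (C : numClosedFieldType) (rho : C).
Hypothesis rho_ge0 : 0 <= rho.

Definition roots_in_disk (Q : {poly C}) := forall z, root Q z -> `|z| <= rho.

Lemma horner_deriv_prod_XsubC (s : seq C) z : z \notin s ->
  (\prod_(r <- s) ('X - r%:P))^`().[z] =
  (\prod_(r <- s) ('X - r%:P)).[z] * \sum_(r <- s) (z - r)^-1.
Proof.
elim: s => [|r s IH]; first by rewrite !big_nil derivC horner0 mulr0.
rewrite inE negb_or => /andP[zr zs].
rewrite !big_cons derivM derivXsubC mul1r hornerD !hornerM hornerXsubC IH //.
have zr' : z - r != 0 by rewrite subr_eq0.
move: ((\prod_(j <- s) ('X - j%:P)).[z]) (\sum_(j <- s) (z - j)^-1) => a b.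
by field.
Qed.

Lemma mem_Zroots_disk (Q : {poly C}) r :
  Q != 0 -> roots_in_disk Q -> r \in Zroots Q -> `|r| <= rho.
Proof. by move=> Q0 hQ; rewrite mem_Zroots //; exact: hQ. Qed.

Lemma logderiv_outside_disk (Q : {poly C}) z :
  Q != 0 -> roots_in_disk Q -> rho < `|z| ->
  Q.[z] != 0 /\ Q^`().[z] = Q.[z] * \sum_(r <- Zroots Q) (z - r)^-1.
Proof.
move=> Q0 hQ hz.
have zQ : z \notin Zroots Q.
  by apply: contraTN hz => /(mem_Zroots_disk Q0 hQ) hz; rewrite le_gtF.
have hQz : Q.[z] != 0 by rewrite -rootE -mem_Zroots.
split=> //; rewrite [in LHS](Zroots_spec Q) derivZ hornerZ.
by rewrite horner_deriv_prod_XsubC // mulrA -hornerZ -(Zroots_spec Q).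
Qed.

Lemma size_polar_deriv (Q : {poly C}) d zeta : size Q = d.+2 ->
  roots_in_disk Q -> rho < `|zeta| -> size (polar_deriv d.+1 zeta Q) = d.+1.
Proof.
move=> sQ hQ hzeta; have Q0 : Q != 0 by rewrite -size_poly_eq0 sQ.
have Qhi j : (d.+2 <= j)%N -> Q`_j = 0 by apply/leq_sizeP; rewrite sQ.
apply/eqP; rewrite eqn_leq; apply/andP; split.
  apply/leq_sizeP => j hj; rewrite coef_polar_deriv.
  case: (ltngtP j d.+1) hj => // [hj _ | -> _].
    rewrite (Qhi j) // (Qhi j.+1); last exact: ltnW.
    by rewrite mulr0 !mul0rn subrr addr0.
  by rewrite subrr add0r (Qhi d.+2) // mulr0 mul0rn.
rewrite ltnNge; apply/negP => /leq_sizeP/(_ d (leqnn d)) /eqP.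
rewrite coef_polar_deriv mulrS addrK.
have sZ : size (Zroots Q) = d.+1 by rewrite size_Zroots // sQ.
have Qd : Q`_d = lead_coef Q * - \sum_(r <- Zroots Q) r.
  have := @coefPn_prod_XsubC _ (Zroots Q); rewrite sZ => /(_ isT) <-.
  by rewrite {1}(Zroots_spec Q) coefZ.
have Qd1 : Q`_d.+1 = lead_coef Q by rewrite lead_coefE sQ.
rewrite Qd Qd1 [zeta * _]mulrC -mulrnAr -mulrDr mulf_eq0 lead_coef_eq0 (negbTE Q0) /=.
rewrite addrC subr_eq0 => /eqP sum_roots.
have := norm_sum_le_size (fun r => mem_Zroots_disk Q0 hQ (r := r)).
by rewrite sZ -sum_roots normrMn ler_pMn2r // lt_geF.
Qed.

(* At a root z outside the disk, (d+1)/(z - zeta) is the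
   sum of the 1/(z - r) over the roots r of Q, so by moebius_sum_in_disk the
   Moebius image of zeta is in the disk, hence so is zeta. *)
Lemma polar_deriv_roots_in_disk (Q : {poly C}) d zeta : size Q = d.+2 ->
  roots_in_disk Q -> rho < `|zeta| -> roots_in_disk (polar_deriv d.+1 zeta Q).
Proof.
move=> sQ hQ hzeta z; have Q0 : Q != 0 by rewrite -size_poly_eq0 sQ.
rewrite real_leNgt ?normr_real ?ger0_real //; apply: contraL => hz.
have [Qz0 logQ] := logderiv_outside_disk Q0 hQ hz.
rewrite rootE /polar_deriv !hornerE /= logQ subr_eq0; apply/eqP => e.
have sum_inv : (d.+1)%:R = (z - zeta) * \sum_(r <- Zroots Q) (z - r)^-1.
  by apply: (mulIf Qz0); rewrite mulr_natl -hornerMn e; ring.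
have zz : z - zeta != 0.
  by apply/eqP => zz0; move/eqP: sum_inv; rewrite zz0 mul0r pnatr_eq0.
have := moebius_sum_in_disk rho_ge0 hz (fun r => mem_Zroots_disk Q0 hQ).
rewrite size_Zroots // sQ /=.
have -> : \sum_(r <- Zroots Q) (z - r)^-1 = (d.+1)%:R / (z - zeta).
  by rewrite sum_inv mulrC mulKf.
have -> : (`|z| ^+ 2 - rho ^+ 2) * ((d.+1)%:R / (z - zeta)) - z^* *+ d.+1
   = ((`|z| ^+ 2 - rho ^+ 2) / (z - zeta) - z^*) *+ d.+1.
  by rewrite mulrnBl -mulr_natl; congr (_ - _); ring.
rewrite normrMn ler_pMn2r // moebius_in_disk //; first by rewrite lt_geF.
by apply: contraTneq zz => ->; rewrite subrr eqxx.
Qed.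

Lemma pairing_prod_XsubC_neq0 v (s : seq C) N (Q : {poly C}) a :
  a != 0 -> (size s <= N)%N -> size Q = N.+1 -> roots_in_disk Q ->
  (forall u, u \in s -> rho < `|v - u|) ->
  pairing N v (a *: \prod_(u <- s) ('X - u%:P)) Q != 0.
Proof.
elim: s N Q => [|u s IH] N Q a0 sN sQ hQ far.
  by rewrite big_nil alg_polyC pairingC mulf_neq0 ?horner0_derivn_neq0.
case: N sN sQ => [|N] // sN sQ.
rewrite big_cons scalerAr pairing_XsubCM; last first.
  by rewrite size_scale // size_prod_XsubC.
have hu : rho < `|v - u| by apply: far; rewrite inE eqxx.
apply: IH => //; first exact: size_polar_deriv.
  exact: polar_deriv_roots_in_disk.
by move=> x hx; apply: far; rewrite inE hx orbT.
Qed.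
End Laguerre.

Section DiffOp.
Variables (C : numClosedFieldType) (n : nat) (c : 'I_n.+1 -> C).

Lemma horner0_derivn_phi m : (phi C n)^`(m).[0] = (m == n)%:R.
Proof.
rewrite /phi derivnZ derivnXn hornerZ hornerMn hornerXn.
case: (ltngtP m n) => h.
- by rewrite expr0n subn_eq0 leqNgt h /= mul0rn mulr0.
- by rewrite ffact_small // mulr0n mulr0.
- by rewrite h subnn expr0 ffactnn mulVf // pnatr_eq0 -lt0n fact_gt0.
Qed.

Lemma horner0_derivn_diffOp_phi (k : 'I_n.+1) :
  (diffOp c (phi C n))^`(n - k).[0] = c k.
Proof.
have hk : (k <= n)%N by rewrite -ltnS.
rewrite /diffOp linear_sum horner_sum (bigD1 k) //= big1 ?addr0.
  by rewrite derivnZ hornerZ derivn_derivn horner0_derivn_phi subnK ?eqxx ?mulr1.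
move=> j hj; rewrite derivnZ hornerZ derivn_derivn horner0_derivn_phi.
case: eqP => [e|]; last by rewrite mulr0.
have /addnI/val_inj ej : (n - k + j = n - k + k)%N by rewrite e subnK.
by rewrite ej eqxx in hj.
Qed.

Lemma horner_diffOp f v : (diffOp c f).[v] = pairing n v f (diffOp c (phi C n)).
Proof.
rewrite /diffOp horner_sum /pairing; apply: eq_bigr => k _.
by rewrite hornerZ mulrC -/(diffOp c (phi C n)) horner0_derivn_diffOp_phi.
Qed.

Lemma diffOpC a : diffOp c a%:P = (c ord0 * a)%:P.
Proof.
rewrite /diffOp big_ord_recl derivn0 big1 ?addr0 -?mul_polyC ?polyCM // => k _.
by rewrite derivnC scaler0.
Qed.

Lemma size_diffOp_phi : (size (diffOp c (phi C n)) <= n.+1)%N.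
Proof.
apply/leq_sizeP => j hj; rewrite /diffOp coef_sum big1 // => k _.
rewrite coefZ coef_derivn /phi coefZ coefXn.
have -> : ((k : nat) + j == n)%N = false.
  by apply/negbTE; rewrite neq_ltn (leq_trans hj) ?leq_addl ?orbT.
by rewrite mulr0 mul0rn mulr0.
Qed.

Hypothesis T_inv : invertibleOn n (diffOp c).

Lemma diffOp_eq0 f : inPn n f -> diffOp c f = 0 -> f = 0.
Proof.
have [S [_ ST _]] := T_inv; move=> hf Tf0.
have T0 : diffOp c 0 = 0 by rewrite -polyC0 diffOpC mulr0.
have := ST 0; rewrite T0 /inPn size_poly0 => /(_ isT) S0.
by rewrite -(ST _ hf) Tf0 S0.
Qed.

Lemma diffOp_coef0_neq0 : c ord0 != 0.
Proof.
apply/eqP => c0; have h1 : inPn n (1 : {poly C}) by rewrite /inPn size_poly1.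
have := diffOp_eq0 h1; rewrite -polyC1 diffOpC c0 mul0r polyC0 => /(_ erefl).
by move/eqP; rewrite polyC_eq0 oner_eq0.
Qed.

Lemma size_diffOp_phi_eq : size (diffOp c (phi C n)) = n.+1.
Proof.
apply/eqP; rewrite eqn_leq size_diffOp_phi ltnNge; apply/negP => h.
move: diffOp_coef0_neq0; rewrite -horner0_derivn_diffOp_phi subn0.
by rewrite derivn_poly0 // horner0 eqxx.
Qed.

Theorem root_diffOp_near_root f v : inPn n f -> (1 < size f)%N ->
  v \in Zroots (diffOp c f) ->
  exists2 u, u \in Zroots f & `|v - u| <= rootRadius (diffOp c (phi C n)).
Proof.
set Q := diffOp c (phi C n) => hf sf hv.
have f0 : f != 0 by apply: contraTneq sf => ->; rewrite size_poly0.
have Tf0 : diffOp c f != 0 by apply: contra_neq f0; exact: diffOp_eq0.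
have Q0 : Q != 0 by rewrite -size_poly_eq0 size_diffOp_phi_eq.
have hQ : roots_in_disk (rootRadius Q) Q.
  by move=> z hz; apply: le_rootRadius; rewrite mem_Zroots.
have /hasP[u hu near] : has (fun u => `|v - u| <= rootRadius Q) (Zroots f).
  apply: contraT => /hasPn far.
  have : pairing n v f Q != 0.
    rewrite [f in pairing _ _ f]Zroots_spec.
    apply: (pairing_prod_XsubC_neq0 (rootRadius_ge0 Q)) => //.
    - by rewrite lead_coef_eq0.
    - by rewrite size_Zroots // -ltnS prednK ?size_poly_gt0.
    - exact: size_diffOp_phi_eq.
    by move=> u /far; rewrite real_ltNge ?normr_real ?ger0_real ?rootRadius_ge0.
  by rewrite -horner_diffOp -rootE -mem_Zroots // hv.
by exists u.
Qed.
End DiffOp.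

Local Open Scope complex_scope.

Theorem mainTheorem11 (R : realType) (n : nat) (c : 'I_n.+1 -> R[i]) :
  (1 <= n)%N ->
  invertibleOn n (diffOp c) ->
  forall f : {poly R[i]}, inPn n f -> (1 < size f)%N ->
  forall v : R[i], v \in Zroots (diffOp c f) ->
  exists2 u : R[i], u \in Zroots f & `|v - u| <= rootRadius (diffOp c (phi _ n)).
Proof. by move=> _ T_inv f hf sf v hv; exact: root_diffOp_near_root. Qed.
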